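(* Let $f:\mathbb{R}^n\to\mathbb{R}$ be twice differentiable, let $x_0\in\mathbb{R}^n$ and $S_f=\{x : f(x)\le f(x_0)\}$. Assume there exist constants $M \ge m>0$ such that $M\|z\|^2 \ge z^{T}\nabla^2 f(x) z \ge m\|z\|^2$ for all $x\in S_f$ and all $z\in\mathbb{R}^n$. Let $x_k\in S_f$, $g_k=\nabla f(x_k)$, $\Delta t_k>0$, and let the preconditioner $H_k$ be given by the switching rule: either $$H_k = I - \frac{y s^{T} + s y^{T}}{y^{T}s} + 2\frac{y^{T}y}{(y^{T}s)^2} s s^{T}$$ for some vectors $s,y\in\mathbb{R}^n$ with $|s^{T}y|>\theta\|s\|^2$ (with $\theta>0$), or $H_k=(\nabla^2 f(x_k))^{-1}$. Let $s_k = -\frac{\Delta t_k}{1+\Delta t_k} H_k g_k$ and define $m_k(s) = \frac{1+0.5\Delta t_k}{1+\Delta t_k}\, g_k^{T}s$. Then there is a positive constant $c_m$ (independent of $k$) such that $$m_k(0)-m_k(s_k) \ge \frac{c_m \Delta t_k}{2(1+\Delta t_k)}\|g_k\|^2 .$$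
   Context: $\|\cdot\|$ is the Euclidean norm, $I$ the identity matrix. $m_k$ is the simplified local model of $f(x_k+s)-f(x_k)$ used in the explicit continuation method $x_{k+1}=x_k+s_k$, $s_k=\frac{\Delta t_k}{1+\Delta t_k}s_k^N$, $s_k^N=-H_kg_k$. *)

From HB Require Import structures.
From mathcomp Require Import all_boot all_order all_algebra.
From mathcomp Require Import all_classical all_reals all_analysis.
Set Implicit Arguments. Unset Strict Implicit. Unset Printing Implicit Defensive.
Import Order.TTheory GRing.Theory Num.Theory.
Import numFieldNormedType.Exports.
Local Open Scope ring_scope.

Definition dotv {R : realType} {n : nat} (u v : 'cV[R]_n) : R := (u^T *m v) 0 0.
Definition sqnorm {R : realType} {n : nat} (z : 'cV[R]_n) : R := dotv z z.
Definition qform {R : realType} {n : nat} (A : 'M[R]_n) (z : 'cV[R]_n) : R :=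
  (z^T *m A *m z) 0 0.

Definition ebasis {R : realType} {n : nat} (i : 'I_n) : 'cV[R]_n := delta_mx i 0.

Definition grad {R : realType} {n : nat} (f : 'cV[R]_n -> R) (x : 'cV[R]_n) : 'cV[R]_n :=
  \col_i ('D_(ebasis i) f x).

Definition hess {R : realType} {n : nat} (f : 'cV[R]_n -> R) (x : 'cV[R]_n) : 'M[R]_n :=
  \matrix_(i, j) ('D_(ebasis j) (fun y => 'D_(ebasis i) f y) x).

Definition twice_differentiable {R : realType} {n : nat} (f : 'cV[R]_n -> R) : Prop :=
  (forall x, differentiable f x) /\ (forall x, differentiable (grad f) x).

Definition qn_precond {R : realType} {n : nat} (s y : 'cV[R]_n) : 'M[R]_n :=
  1%:M - (dotv y s)^-1 *: (y *m s^T + s *m y^T)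
       + (2 * dotv y y / (dotv y s) ^+ 2) *: (s *m s^T).

Definition model {R : realType} {n : nat} (dt : R) (g s : 'cV[R]_n) : R :=
  (1 + dt / 2) / (1 + dt) * dotv g s.

From HB Require Import structures.
From mathcomp Require Import all_boot all_order all_algebra.
From mathcomp Require Import all_classical all_reals all_analysis.
From mathcomp Require Import ring lra.
Import Order.TTheory GRing.Theory Num.Theory.
Import numFieldNormedType.Exports.
Local Open Scope ring_scope.

Set Implicit Arguments.
Unset Strict Implicit.

(* Both preconditioners are uniformly positive definite on gradients.  For the
   quasi-Newton matrix, g^T H g is half of |g|^2 plus half of a square,
   whatever s and y are.  For the Newton choice, the
   Hessian is symmetric by Schwarz's theorem and satisfies m I <= A <= M I, so
   g^T A^-1 g >= |g|^2 / M.  Hence g^T H_k g >= c_m |g|^2 with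
   c_m = min(1/2, 1/M), and the model decrease equals
   (1 + dt/2)/(1 + dt) * dt/(1 + dt) * g^T H_k g, where the first factor is
   at least 1/2. *)

Lemma dist_le_common_approx (R : realDomainType) (k p q A e : R) : 0 < k ->
  `|A - k * p| <= k * e -> `|A - k * q| <= k * e -> `|p - q| <= 2 * e.
Proof.
move=> k_gt0 le_p le_q.
have : `|k * (p - q)| <= k * (2 * e).
  rewrite (_ : k * (p - q) = (A - k * q) - (A - k * p)); last by ring.
  apply: le_trans (ler_normB _ _) _; lra.
by rewrite normrM gtr0_norm // ler_pM2l.
Qed.

Section Schwarz.
Context {R : realType} {V : normedModType R}.
Implicit Types (f : V -> R) (x a b v : V).

Lemma differentiable_approx f x : differentiable f x ->
  forall eps, 0 < eps -> exists2 d, 0 < d &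
    forall v, `|v| < d -> `|f (x + v) - f x - 'd f x v| <= eps * `|v|.
Proof.
move=> df eps eps_gt0.
have [_ /eqaddoP /(_ eps eps_gt0) /nbhs_normP [d d_gt0 near_x]] := (diff_locallyP x f).1 df.
exists d => // v lt_vd.
have := near_x v; rewrite /= sub0r normrN => /(_ lt_vd).
by rewrite !fctE /= [v + x]addrC opprD addrA.
Qed.

Lemma is_derive_line f c a t : derivable f (c + t *: a) a ->
  is_derive t 1 (fun u : R => f (c + u *: a)) ('D_a f (c + t *: a)).
Proof.
move=> df.
have quotientE : (fun h : R => h^-1 *: (((fun u : R => f (c + u *: a)) \o shift t) (h *: 1)
                                        - f (c + t *: a)))
   = (fun h : R => h^-1 *: ((f \o shift (c + t *: a)) (h *: a) - f (c + t *: a))).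
  apply/funext => h /=; congr (_ *: (f _ - _)).
  by rewrite scalerDl /GRing.scale /= mulr1 addrCA.
split; last by rewrite /derive quotientE.
by move: df; rewrite /derivable quotientE.
Qed.

Lemma second_difference_mvt f x a b h : (forall y, differentiable f y) -> 0 < h ->
  exists2 xi, 0 < xi < h &
    (f (x + h *: b + h *: a) - f (x + h *: a)) - (f (x + h *: b) - f x)
      = h * ('D_a f (x + h *: b + xi *: a) - 'D_a f (x + xi *: a)).
Proof.
move=> df h_gt0.
pose phi := ((fun t => f (x + h *: b + t *: a)) - (fun t => f (x + t *: a)) : R -> R).
have dphi (t : R) : is_derive t 1 phi ('D_a f (x + h *: b + t *: a) - 'D_a f (x + t *: a)).
  by apply: is_deriveB; apply: is_derive_line; apply: diff_derivable.
have phi_cont : {within `[0, h], continuous phi}%classic.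
  apply: continuous_subspaceT => t.
  apply/differentiable_continuous/derivable1_diffP.
  exact: (@ex_derive _ _ _ _ _ _ _ (dphi t)).
have [xi xi_in phiE] := MVT h_gt0 (fun t _ => dphi t) phi_cont.
exists xi; first by move: xi_in; rewrite in_itv.
by rewrite [RHS]mulrC -[X in _ * X]subr0 -phiE /phi !fctE !scale0r !addr0.
Qed.

Lemma second_difference_approx f x a b (eps d h : R) :
  (forall y, differentiable f y) -> 0 < h -> 0 <= eps ->
  (forall v, `|v| < d ->
     `|'D_a f (x + v) - 'D_a f x - 'd (fun y => 'D_a f y) x v| <= eps * `|v|) ->
  h * (`|a| + `|b|) < d ->
  `|(f (x + h *: b + h *: a) - f (x + h *: a)) - (f (x + h *: b) - f x)
     - h ^+ 2 * 'd (fun y => 'D_a f y) x b| <= h ^+ 2 * (2 * eps * (`|a| + `|b|)).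
Proof.
move=> df h_gt0 eps_ge0 approx lt_hK_d.
set K := `|a| + `|b|; set L := 'd (fun y => 'D_a f y) x.
pose err v := 'D_a f (x + v) - 'D_a f x - L v.
have err_le v : `|v| <= h * K -> `|err v| <= eps * (h * K).
  move=> le_v; apply: le_trans (approx v (le_lt_trans le_v lt_hK_d)) _.
  by rewrite ler_wpM2l.
have [xi /andP[xi_gt0 xi_lt_h] ->] := second_difference_mvt x a b df h_gt0.
have le_xia : `|xi *: a| <= h * `|a|.
  by rewrite normrZ gtr0_norm // ler_wpM2r // ltW.
have le_hb : `|h *: b| <= h * `|b| by rewrite normrZ gtr0_norm.
have errE : h * ('D_a f (x + h *: b + xi *: a) - 'D_a f (x + xi *: a)) - h ^+ 2 * L b
    = h * (err (h *: b + xi *: a) - err (xi *: a)).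
  have LE : L (h *: b + xi *: a) - L (xi *: a) = h * L b by rewrite linearD addrK linearZ.
  rewrite /err addrA expr2 -mulrA -LE.
  move: ('D_a f _) ('D_a f _) ('D_a f x) (L _) (L _) => p q r Lv1 Lv2; ring.
rewrite errE normrM gtr0_norm // [X in _ <= X](_ : _ = h * (2 * (eps * (h * K)))); last by rewrite expr2; ring.
rewrite ler_pM2l // (le_trans (ler_normB _ _)) // mulr2n mulrDl mul1r lerD ?err_le //.
  by apply: le_trans (ler_normD _ _) _; rewrite /K mulrDr addrC lerD.
by apply: le_trans le_xia _; rewrite ler_wpM2l ?(ltW h_gt0) // /K lerDl.
Qed.

(* Both mixed derivatives are h^-2 times the same second difference, up to an
   error O(eps) ([second_difference_approx] for (a, b) and for (b, a)). *)
Lemma schwarz_derive f x a b : (forall y, differentiable f y) ->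
  differentiable (fun y => 'D_a f y) x -> differentiable (fun y => 'D_b f y) x ->
  'D_b (fun y => 'D_a f y) x = 'D_a (fun y => 'D_b f y) x.
Proof.
move=> df dDa dDb; rewrite (deriveE _ dDa) (deriveE _ dDb).
apply/eqP; rewrite -subr_eq0 -normr_le0; apply/ler_addgt0Pr => e e_gt0; rewrite add0r.
set K := `|a| + `|b|.
have K_ge0 : 0 <= K by rewrite addr_ge0.
pose eps := e / (4 * K + 1).
have eps_gt0 : 0 < eps by rewrite divr_gt0 //; lra.
have [da da_gt0 approx_a] := differentiable_approx dDa eps_gt0.
have [db db_gt0 approx_b] := differentiable_approx dDb eps_gt0.
pose d := Num.min da db; pose h := d / (K + 1).
have d_le_da : d <= da by rewrite ge_min lexx.
have d_le_db : d <= db by rewrite ge_min lexx orbT.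
have h_gt0 : 0 < h by rewrite divr_gt0 ?lt_min ?da_gt0 //; lra.
have lt_hK_d : h * K < d.
  by rewrite -[X in _ < X](@divfK _ (K + 1)) ?ltr_pM2l; lra.
have Ea := second_difference_approx df h_gt0 (ltW eps_gt0)
  (fun v lt_vd => approx_a v (lt_le_trans lt_vd d_le_da)) lt_hK_d.
have lt_hK_d' : h * (`|b| + `|a|) < d by rewrite addrC.
have Eb := second_difference_approx df h_gt0 (ltW eps_gt0)
  (fun v lt_vd => approx_b v (lt_le_trans lt_vd d_le_db)) lt_hK_d'.
have swap_diff (A B C D : R) : A - B - (C - D) = A - C - (B - D) by ring.
rewrite [`|b| + _]addrC [x + h *: a + _]addrAC swap_diff -/K in Eb; rewrite -/K in Ea.
have h2_gt0 : 0 < h ^+ 2 by rewrite exprn_gt0.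
apply: le_trans (dist_le_common_approx h2_gt0 Ea Eb) _.
rewrite mulrA mulrAC -[X in _ <= X](@divfK _ (4 * K + 1)) -/eps ?ler_wpM2l ?ltW //; lra.
Qed.
End Schwarz.

Section EuclideanForm.
Context {R : realType} {n : nat}.
Implicit Types (u v w g : 'cV[R]_n) (A : 'M[R]_n).

Lemma dotv_sum u v : dotv u v = \sum_i u i 0 * v i 0.
Proof. by rewrite /dotv mxE; apply: eq_bigr => i _; rewrite mxE. Qed.

Lemma dotvC u v : dotv u v = dotv v u.
Proof. by rewrite !dotv_sum; apply: eq_bigr => i _; rewrite mulrC. Qed.

Lemma dotvDr u v w : dotv u (v + w) = dotv u v + dotv u w.
Proof. by rewrite /dotv mulmxDr mxE. Qed.

Lemma dotvNr u v : dotv u (- v) = - dotv u v.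
Proof. by rewrite /dotv mulmxN mxE. Qed.

Lemma dotvZr u v (a : R) : dotv u (a *: v) = a * dotv u v.
Proof. by rewrite /dotv -scalemxAr mxE. Qed.

Lemma dotvDl u v w : dotv (v + w) u = dotv v u + dotv w u.
Proof. by rewrite dotvC dotvDr !(dotvC u). Qed.

Lemma dotvNl u v : dotv (- v) u = - dotv v u.
Proof. by rewrite dotvC dotvNr dotvC. Qed.

Lemma dotvZl u v (a : R) : dotv (a *: v) u = a * dotv v u.
Proof. by rewrite dotvC dotvZr dotvC. Qed.

Lemma dotv0r u : dotv u 0 = 0.
Proof. by rewrite /dotv mulmx0 mxE. Qed.

Lemma dotv_mulmxr u A v : dotv u (A *m v) = dotv (A^T *m u) v.
Proof. by rewrite /dotv trmx_mul trmxK mulmxA. Qed.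

Lemma sqnorm_ge0 u : 0 <= sqnorm u.
Proof. by rewrite /sqnorm dotv_sum sumr_ge0 // => i _; rewrite -expr2 sqr_ge0. Qed.

Lemma sqnorm_eq0 u : (sqnorm u == 0) = (u == 0).
Proof.
apply/eqP/eqP => [u0 | ->]; last by rewrite /sqnorm dotv0r.
apply/matrixP => i j; rewrite ord1 mxE; apply/eqP; rewrite -sqrf_eq0 expr2.
by move: u0; rewrite /sqnorm dotv_sum => /psumr_eq0P ->// k _; rewrite -expr2 sqr_ge0.
Qed.

Lemma qformE A u : qform A u = dotv u (A *m u).
Proof. by rewrite /qform /dotv mulmxA. Qed.

Lemma mulmx_outer u v w : u *m v^T *m w = dotv v w *: u.
Proof. by rewrite -mulmxA [v^T *m w]mx11_scalar mul_mx_scalar. Qed.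

End EuclideanForm.

Section Preconditioners.
Context {R : realType} {n : nat}.
Implicit Types (s y g : 'cV[R]_n) (A : 'M[R]_n).

(* With c = (y^T s)^-1, g^T H g = |g|^2 / 2 + |g - 2 c (s^T g) y|^2 / 2; for
   y^T s = 0 the junk value 0^-1 = 0 makes H = I. *)
Lemma qn_precond_quad_ge s y g : sqnorm g / 2 <= dotv g (qn_precond s y *m g).
Proof.
rewrite /qn_precond !mulmxDl mulNmx -!scalemxAl mulmxDl !mulmx_outer mul1mx.
set c := (dotv y s)^-1.
rewrite (_ : 2 * dotv y y / dotv y s ^+ 2 = 2 * dotv y y * c ^+ 2); last by rewrite exprVn.
have := sqnorm_ge0 (g - (2 * c * dotv s g) *: y); rewrite /sqnorm.
rewrite !(dotvDl, dotvDr, dotvNl, dotvNr, dotvZl, dotvZr) !(dotvC y g) !(dotvC s g).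
move: (dotv g g) (dotv g s) (dotv g y) (dotv y y) c => G p q Y c; nra.
Qed.

Lemma unitmx_of_coercive A (m : R) :
  0 < m -> (forall z, m * sqnorm z <= qform A z) -> A \in unitmx.
Proof.
move=> m_gt0 coercive; rewrite -row_free_unit -kermx_eq0.
apply: contraT => /rowV0Pn [v /sub_kermxP vA0 v_neq0].
have := coercive v^T; rewrite /qform trmxK vA0 mul0mx mxE pmulr_rle0 // => le_sq0.
have : sqnorm v^T == 0 by rewrite eq_le le_sq0 sqnorm_ge0.
by rewrite sqnorm_eq0 trmx_eq0 (negPf v_neq0).
Qed.

Lemma invmx_quad_ge A (M : R) g : A^T = A -> A \in unitmx -> 0 < M ->
  (forall z, 0 <= qform A z) -> (forall z, qform A z <= M * sqnorm z) ->
  sqnorm g / M <= dotv g (invmx A *m g).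
Proof.
move=> A_sym A_unit M_gt0 psd bnd.
set z := invmx A *m g.
have Az : A *m z = g by rewrite /z mulKVmx.
have ttq : M^-1 * (M^-1 * qform A g) <= M^-1 * sqnorm g.
  by rewrite ler_wpM2l ?invr_ge0 ?(ltW M_gt0) // mulrC ler_pdivrMr // mulrC.
(* 0 <= (z - g/M)^T A (z - g/M) = g^T z - 2 |g|^2 / M + g^T A g / M^2 *)
have := psd (z - M^-1 *: g).
rewrite qformE mulmxBr -scalemxAr Az !(dotvDl, dotvDr, dotvNl, dotvNr, dotvZl, dotvZr).
rewrite dotv_mulmxr A_sym Az (dotvC z g) -(qformE A g) -/(sqnorm g) mulrC.
lra.
Qed.
End Preconditioners.

Lemma hess_sym (R : realType) (n : nat) (f : 'cV[R]_n -> R) (x : 'cV[R]_n) :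
  twice_differentiable f -> (hess f x)^T = hess f x.
Proof.
move=> [df dgrad].
have dpartial k : differentiable (fun y => 'D_(ebasis k) f y) x.
  have -> : (fun y => 'D_(ebasis k) f y) = (fun N : 'cV[R]_n => N k 0) \o grad f.
    by apply/funext => y; rewrite /= /grad mxE.
  by apply: differentiable_comp; [exact: dgrad | exact: differentiable_coord].
apply/matrixP => i j; rewrite !mxE.
exact: schwarz_derive df (dpartial j) (dpartial i).
Qed.

Lemma model_decrease_ge (R : realType) (n : nat) (dt c : R) (g : 'cV[R]_n) (H : 'M[R]_n) :
  0 < dt -> 0 <= c -> c * sqnorm g <= dotv g (H *m g) ->
  c * dt / (2 * (1 + dt)) * sqnorm g
    <= model dt g 0 - model dt g (- (dt / (1 + dt)) *: (H *m g)).
Proof.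
move=> dt_gt0 c_ge0 le_cD.
have D_ge0 : 0 <= dotv g (H *m g) := le_trans (mulr_ge0 c_ge0 (sqnorm_ge0 g)) le_cD.
have dt1_gt0 : 0 < 1 + dt by lra.
rewrite /model dotv0r mulr0 sub0r dotvZr mulNr mulrN opprK.
rewrite (_ : c * dt / (2 * (1 + dt)) * sqnorm g = dt / (1 + dt) * (c * sqnorm g) / 2);
  last by field; rewrite gt_eqF.
have half_le : 1 / 2 <= (1 + dt / 2) / (1 + dt) by rewrite ler_pdivlMr //; lra.
have a_gt0 : 0 < dt / (1 + dt) by rewrite divr_gt0.
move: half_le a_gt0 le_cD D_ge0.
move: ((1 + dt / 2) / (1 + dt)) (dt / (1 + dt)) (c * sqnorm g) (dotv g (H *m g))
  => k a cG D half_le a_gt0 le_cD D_ge0.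
have : a * cG <= a * D by rewrite ler_wpM2l ?(ltW a_gt0).
have : 1 / 2 * (a * D) <= k * (a * D) by rewrite ler_wpM2r // mulr_ge0 ?(ltW a_gt0).
lra.
Qed.

Theorem lemma2 (R : realType) (n : nat) (f : 'cV[R]_n -> R) (x0 : 'cV[R]_n)
    (m M theta : R) :
  twice_differentiable f ->
  0 < m -> m <= M -> 0 < theta ->
  (forall x z : 'cV[R]_n, f x <= f x0 ->
     m * sqnorm z <= qform (hess f x) z /\ qform (hess f x) z <= M * sqnorm z) ->
  exists cm : R, 0 < cm /\
    forall (xk : 'cV[R]_n) (dt : R) (Hk : 'M[R]_n),
      f xk <= f x0 -> 0 < dt ->
      ((exists s y : 'cV[R]_n,
          theta * sqnorm s < `|dotv s y| /\ Hk = qn_precond s y)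
       \/ Hk = invmx (hess f xk)) ->
      let gk := grad f xk in
      let sk := - (dt / (1 + dt)) *: (Hk *m gk) in
      cm * dt / (2 * (1 + dt)) * sqnorm gk <= model dt gk 0 - model dt gk sk.
Proof.
move=> f2 m_gt0 le_mM _ hess_bounds; have M_gt0 := lt_le_trans m_gt0 le_mM.
have cm_gt0 : 0 < Num.min 2^-1 M^-1 by rewrite lt_min !invr_gt0 M_gt0 ltr0n.
exists (Num.min 2^-1 M^-1); split=> // xk dt Hk f_xk dt_gt0 Hk_choice.
cbv zeta; set gk := grad f xk.
apply: model_decrease_ge (ltW cm_gt0) _ => //.
case: Hk_choice => [[s [y [_ ->]]] | ->].
  apply: le_trans (qn_precond_quad_ge s y gk).
  by rewrite mulrC ler_wpM2l ?sqnorm_ge0 // ge_min lexx.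
have coercive z := (hess_bounds xk z f_xk).1.
have bounded z := (hess_bounds xk z f_xk).2.
apply: le_trans (invmx_quad_ge gk (hess_sym xk f2) (unitmx_of_coercive m_gt0 coercive) M_gt0
  (fun z => le_trans (mulr_ge0 (ltW m_gt0) (sqnorm_ge0 z)) (coercive z)) bounded).
by rewrite mulrC ler_wpM2l ?sqnorm_ge0 // ge_min lexx orbT.
Qed.
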